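(* Let $\{\omega_v:v\in\mathbb{Z}^2\}$ be i.i.d. real random variables with $\bar F(x)=\mathbb{P}(\omega>x)$, let $n\ge1$, $\beta_n>0$, $k_n>0$, and set $\tilde\omega_v=\omega_v\mathds{1}_{\{\omega_v\le k_n\}}$. Let $0=h_0<h_1<\dots<h_\ell$ be integers with $\ell\ge1$ and $h_{\ell-1}<n\le h_\ell$. Then for any real number $A>0$, \[ \mathbb{P}\big(\log Z^{\omega}_{n,\beta_n}-\log Z^{\tilde\omega}_{n,\beta_n}>A\big)\le|\mathbf{B}_1|\cdot\bar F(k_n)+\mathbb{P}\Big(\sum_{j=2}^{\ell}\exp(\beta_nM_j)\,\mathbf{P}^{\tilde\omega}_{n,\beta_n}(\mathcal{B}_{j-1}^c)>A\Big). \]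
   Context: $\mathscr{S}_0^n$ is the set of nearest-neighbour paths $\mathbf{s}=((i,s_i))_{i=0}^n$ with $s_0=0$, $|s_i-s_{i-1}|=1$. For an environment $\{\omega_v\}$ and $\mathcal{A}\subseteq\mathscr{S}_0^n$, $Z^{\omega}_{n,\beta}(\mathcal{A}):=2^{-n}\sum_{\mathbf{s}\in\mathcal{A}}\exp\big(\beta\sum_{i=1}^n\omega_{i,s_i}\big)$ and $Z^{\omega}_{n,\beta}:=Z^{\omega}_{n,\beta}(\mathscr{S}_0^n)$; the polymer measure is $\mathbf{P}^{\omega}_{n,\beta}(\mathcal{A})=Z^{\omega}_{n,\beta}(\mathcal{A})/Z^{\omega}_{n,\beta}$. For $j=1,\dots,\ell$: $\mathbf{B}_j=([0,n]\times(-h_j,h_j))\cap\mathbb{Z}^2$ with cardinality $|\mathbf{B}_j|$; $\mathcal{B}_j=\{\mathbf{s}\in\mathscr{S}_0^n:\max_{1\le i\le n}|s_i|<h_j\}$ and $\mathcal{B}_j^c=\mathscr{S}_0^n\setminus\mathcal{B}_j$; $M_j=\sum_{v\in\mathbf{B}_j}\omega_v\mathds{1}_{\{\omega_v>k_n\}}$. *)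

From HB Require Import structures.
From mathcomp Require Import all_boot all_order all_algebra.
From mathcomp Require Import all_classical all_reals all_analysis.
Unset Printing Implicit Defensive.
Import Order.TTheory GRing.Theory Num.Theory.
Local Open Scope classical_set_scope.
Local Open Scope ring_scope.

(* Sites of Z^2 are pairs of integers (time, height). *)
Definition site := (int * int)%type.

(* A path in S_0^n is encoded bijectively by its n steps: st k = true means
   s_{k+1} - s_k = +1, false means -1.  s_0 = 0. *)
Definition steps (n : nat) := {ffun 'I_n -> bool}.

Definition pos (n : nat) (st : steps n) (i : nat) : int :=
  \sum_(k < n | (k < i)%N) (if st k then 1 else -1).

Definition Zpart {R : realType} (n : nat) (beta : R) (om : site -> R)
  (A : pred (steps n)) : R :=
  ((2 : R) ^+ n)^-1 * \sum_(st : steps n | A st)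
     expR (beta * \sum_(i < n) om ((i.+1)%:Z, pos n st i.+1)).

Definition Zfull {R : realType} (n : nat) (beta : R) (om : site -> R) : R :=
  Zpart n beta om predT.

Definition polymer {R : realType} (n : nat) (beta : R) (om : site -> R)
  (A : pred (steps n)) : R :=
  Zpart n beta om A / Zfull n beta om.

Definition inBox (n h : nat) : pred (steps n) :=
  fun st => [forall i : 'I_n, `|pos n st i.+1| < h%:Z].

Definition outBox (n h : nat) : pred (steps n) :=
  fun st => ~~ inBox n h st.

(* the list of the points of the box ([0,n] x (-h,h)) cap Z^2, without
   repetition (heights -(h-1), ..., h-1) *)
Definition box_pts (n h : nat) : seq site :=
  [seq (i%:Z, k%:Z - (h%:Z - 1)) | i <- iota 0 n.+1, k <- iota 0 (2 * h).-1].

Definition box_card (n h : nat) : nat := size (box_pts n h).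

Definition Mbox {R : realType} (n h : nat) (k : R) (om : site -> R) : R :=
  \sum_(v <- box_pts n h) (if om v > k then om v else 0).

Definition trunc {R : realType} (k : R) (om : site -> R) : site -> R :=
  fun v => if om v <= k then om v else 0.

Definition mutually_independent {d} {T : measurableType d} {R : realType}
  (P : probability T R) (I : eqType) (X : I -> {RV P >-> R}) : Prop :=
  forall (J : seq I) (B : I -> set R), uniq J ->
    (forall i, i \in J -> measurable (B i)) ->
    P (\big[setI/setT]_(i <- J) (X i @^-1` B i)) =
    (\prod_(i <- J) P (X i @^-1` B i))%E.

Definition identically_distributed {d} {T : measurableType d} {R : realType}
  (P : probability T R) (I : Type) (X : I -> {RV P >-> R}) : Prop :=
  forall (i j : I) (B : set R), measurable B ->
    P (X i @^-1` B) = P (X j @^-1` B).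

(* Write omega_v = tilde omega_v + e_v with e_v = omega_v 1{omega_v > k} >= 0,
   so that the weight of a path is its tilde-weight times
   exp(beta sum_i e_(i,s_i)).  Call critical the sites of B_1 at positive
   times (when h_1 >= 2) and the two corners (n, +-n); there are at most |B_1|
   of them.  If omega <= k at every critical site, a path inside B_1 collects
   no excess, while a path leaving B_(j-1) but staying in B_j (corners aside)
   collects at most M_j.  Hence
     Z^omega <= Z^tilde (1 + sum_j exp(beta M_j) P^tilde(B_(j-1)^c)),
   and ln(1 + x) <= x bounds the log-ratio by the sum.  A union bound over the
   critical sites, each exceeding k with probability bar F(k), concludes. *)

From HB Require Import structures.
From mathcomp Require Import all_boot all_order all_algebra.
From mathcomp Require Import all_classical all_reals all_analysis.
From mathcomp Require Import measurable_realfun zify.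
Import Order.TTheory GRing.Theory Num.Theory.
Local Open Scope classical_set_scope.
Local Open Scope ring_scope.

Section PathHeights.
Context {n : nat} (st : steps n).

Lemma pos0 : pos n st 0 = 0.
Proof. by rewrite /pos big_pred0. Qed.

Lemma pos_succ {t} (ht : (t < n)%N) :
  pos n st t.+1 = pos n st t + (if st (Ordinal ht) then 1 else -1).
Proof.
rewrite /pos (bigID (fun k : 'I_n => (k < t)%N)) /=; congr (_ + _).
  by apply: eq_bigl => k; rewrite ltnS andb_idl // => /ltnW.
rewrite (big_pred1 (Ordinal ht)) // => k /=.
by rewrite ltnS -leqNgt -eqn_leq.
Qed.

Lemma pos_succ_ge t : (n <= t)%N -> pos n st t.+1 = pos n st t.
Proof.
move=> nt; apply: eq_bigl => k; have kt : (k < t)%N := leq_trans (ltn_ord k) nt.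
by rewrite kt ltnS ltnW.
Qed.

Lemma abs_pos_le t : `|pos n st t| <= t%:Z.
Proof.
elim: t => [|t IH]; first by rewrite pos0.
have [ht|ht] := ltnP t n; last by rewrite pos_succ_ge //; lia.
by rewrite (pos_succ ht); case: (st _); lia.
Qed.

Lemma abs_pos1 : (1 <= n)%N -> `|pos n st 1| = 1.
Proof. by move=> n1; rewrite (pos_succ n1) pos0; case: (st _). Qed.

End PathHeights.

Definition grid (a m h : nat) : seq site :=
  [seq (i%:Z, k%:Z - (h%:Z - 1)) | i <- iota a m, k <- iota 0 (2 * h).-1].

Lemma mem_grid a m h t (p : int) :
  (a <= t < a + m)%N -> `|p| < h%:Z -> (t%:Z, p) \in grid a m h.
Proof.
move=> ht hp; apply/allpairsP; exists (t, absz (p + h%:Z - 1)%R).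
rewrite /= !mem_iota add0n; change (2 * h)%R with (2 * h)%N.
split; [lia | lia | congr pair; lia].
Qed.

Lemma size_grid a m h : size (grid a m h) = (m * (2 * h).-1)%N.
Proof. by rewrite size_allpairs !size_iota. Qed.

(* Time-0 sites are never visited, while the corners (n, +-n) are the only
   sites a path may visit outside B_l (when n = h_l); so this list is no longer
   than B_1.  For h_1 = 1 no path stays in B_1 and the grid part is useless. *)
Definition critical_sites (n h : nat) : seq site :=
  (n%:Z, n%:Z) :: (n%:Z, - n%:Z) :: (if (2 <= h)%N then grid 1 n h else [::]).

Lemma size_critical_sites n h :
  (1 <= n)%N -> (1 <= h)%N -> (size (critical_sites n h) <= box_card n h)%N.
Proof.
move=> n1 h1; rewrite /box_card /box_pts -/(grid 0 n.+1 h) size_grid /=.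
case: ifP => h2; rewrite ?size_grid /=; nia.
Qed.

Definition path_site {n} (st : steps n) (i : 'I_n) : site := ((i.+1)%:Z, pos n st i.+1).

Section CriticalPathSites.
Context {n h : nat} {st : steps n} {i : 'I_n}.

Lemma path_site_in_grid :
  (2 <= h)%N -> `|pos n st i.+1| < h%:Z -> path_site st i \in critical_sites n h.
Proof.
move=> h2 hp; rewrite /critical_sites h2 !in_cons mem_grid ?orbT //.
by have := ltn_ord i; lia.
Qed.

Lemma path_site_at_corner {H : nat} :
  (n <= H)%N -> H%:Z <= `|pos n st i.+1| -> path_site st i \in critical_sites n h.
Proof.
move=> nH hp; have ilt := ltn_ord i; have habs := abs_pos_le st i.+1.
have e : i.+1 = n by lia.
rewrite /path_site /critical_sites !in_cons e in hp habs *.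
have [-> | ->] : pos n st n = n%:Z \/ pos n st n = - n%:Z by lia.
  by rewrite eqxx.
by rewrite eqxx orbT.
Qed.

End CriticalPathSites.

Lemma ex_last_false (P : pred nat) m : (1 <= m)%N -> ~~ P 1%N ->
  exists j, [/\ (1 <= j <= m)%N, ~~ P j & j = m \/ P j.+1].
Proof.
elim: m => // m IH _ nP1; have [-> | m_gt0] := posnP m; first by exists 1%N; split => //; left.
have [j [jm nPj [jE | Pj1]]] := IH m_gt0 nP1; last by exists j; split => //; [lia | right].
subst j.
have [Pm1 | nPm1] := boolP (P m.+1); first by exists m; split => //; [lia | right].
by exists m.+1; split => //; [lia | left].
Qed.

Lemma path_sites_cover {n l : nat} {h : nat -> nat} (st : steps n) :
  (1 <= n)%N -> (1 <= l)%N -> (n <= h l)%N ->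
  (forall i, path_site st i \in critical_sites n (h 1%N)) \/
  exists2 j, (2 <= j <= l)%N & outBox n (h j.-1) st /\
    forall i, path_site st i \in critical_sites n (h 1%N) \/ `|pos n st i.+1| < (h j)%:Z.
Proof.
move=> n1 l1 nhl.
have [/forallP in1 | out1] := boolP (inBox n (h 1%N) st).
  have h1_ge2 : (2 <= h 1%N)%N by have := in1 (Ordinal n1); rewrite /= abs_pos1 //; lia.
  by left => i; apply: path_site_in_grid.
have [l_le1 | l_gt1] := leqP l 1.
  have l_eq1 : l = 1%N by lia.
  rewrite l_eq1 in nhl; left => i.
  have [hi | hi] := ltP `|pos n st i.+1| (h 1%N)%:Z; last exact: path_site_at_corner nhl hi.
  have [n_eq1 | n_gt1] := leqP n 1.
    have i0 : i.+1 = 1%N by have := ltn_ord i; lia.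
    by apply: (path_site_at_corner (leqnn n)); rewrite i0 abs_pos1; lia.
  by apply: path_site_in_grid => //; lia.
have l1' : (1 <= l.-1)%N by lia.
have [j [jl out_j [j_last | in_j1]]] :=
  @ex_last_false (fun j => inBox n (h j) st) _ l1' out1.
- right; exists j.+1; first lia; split => // i.
  have [hi | hi] := ltP `|pos n st i.+1| (h j.+1)%:Z; first by right.
  by left; apply: (path_site_at_corner _ hi); rewrite j_last prednK; lia.
- by right; exists j.+1; [lia | split => // i; right; move/forallP: in_j1].
Qed.

Lemma ler_sum_support (R : numDomainType) (I : eqType) (s s' : seq I) (F : I -> R) :
  uniq s -> (forall i, 0 <= F i) -> {in s, forall i, F i != 0 -> i \in s'} ->
  \sum_(i <- s) F i <= \sum_(i <- s') F i.
Proof.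
elim: s s' => [|x s IH] s' /=; first by rewrite big_nil => _ F0 _; exact: sumr_ge0.
move=> /andP[x_notin_s uniq_s] F0 supp; rewrite big_cons.
have supp_s : {in s, forall i, F i != 0 -> i \in s'}.
  by move=> i i_s; apply: supp; rewrite inE i_s orbT.
have [Fx0 | Fx_neq0] := eqVneq (F x) 0; first by rewrite Fx0 add0r IH.
have x_s' : x \in s' by apply: supp; rewrite ?inE ?eqxx.
rewrite (perm_big _ (perm_to_rem x_s')) big_cons lerD2l IH // => i i_s Fi0.
by apply: rem_mem; [apply: contraNneq x_notin_s => <- | exact: supp_s].
Qed.

Section Excess.
Context {R : realType} (k : R) (om : site -> R).

Definition excess (v : site) : R := if k < om v then om v else 0.

Lemma excess_ge0 v : 0 < k -> 0 <= excess v.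
Proof. by move=> k0; rewrite /excess; case: ifP => // /(lt_trans k0)/ltW. Qed.

Lemma trunc_add_excess v : trunc k om v + excess v = om v.
Proof. by rewrite /trunc /excess; case: leP; rewrite ?addr0 ?add0r. Qed.

Definition path_excess {n} (st : steps n) : R := \sum_(i < n) excess (path_site st i).

Lemma path_excess_eq0 {n} {st : steps n} {U : seq site} :
  {in U, forall v, om v <= k} -> (forall i, path_site st i \in U) -> path_excess st = 0.
Proof. by move=> Uk stU; apply: big1 => i _; rewrite /excess ltNge Uk. Qed.

Lemma MboxE n H : Mbox n H k om = \sum_(v <- grid 0 n.+1 H) excess v.
Proof. by []. Qed.

Lemma path_excess_le_Mbox {n} {st : steps n} {U : seq site} {H : nat} : 0 < k ->
  {in U, forall v, om v <= k} ->
  (forall i, path_site st i \in U \/ `|pos n st i.+1| < H%:Z) ->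
  path_excess st <= Mbox n H k om.
Proof.
move=> k0 Uk cover.
have -> : path_excess st = \sum_(v <- map (path_site st) (index_enum 'I_n)) excess v.
  by rewrite big_map.
rewrite MboxE; apply: ler_sum_support => [|v|v /mapP[i _ ->]]; last 2 first.
- exact: excess_ge0.
- case: (cover i) => [iU | hi]; first by rewrite /excess ltNge Uk ?eqxx.
  by move=> _; apply: mem_grid hi; have := ltn_ord i; lia.
by rewrite map_inj_uniq ?index_enum_uniq // => i j [/val_inj].
Qed.

End Excess.

Lemma expR_path_excess_le (R : realType) n l (h : nat -> nat) (beta k : R)
    (om : site -> R) (st : steps n) :
  (1 <= n)%N -> (1 <= l)%N -> (n <= h l)%N -> 0 < beta -> 0 < k ->
  {in critical_sites n (h 1%N), forall v, om v <= k} ->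
  expR (beta * path_excess k om st) <=
  1 + \sum_(2 <= j < l.+1 | outBox n (h j.-1) st) expR (beta * Mbox n (h j) k om).
Proof.
move=> n1 l1 nhl beta0 k0 Uk.
have [all_crit | [j jl [out_j cover]]] := path_sites_cover st n1 l1 nhl.
  rewrite (path_excess_eq0 _ _ Uk all_crit) mulr0 expR0 lerDl.
  by apply: sumr_ge0 => j _; exact: expR_ge0.
apply: ler_wpDl ler01 _; rewrite big_mkcond (bigD1_seq j) /=; last 2 first.
- by rewrite mem_index_iota; lia.
- exact: iota_uniq.
rewrite out_j -[X in X <= _]addr0 lerD //; last first.
  by apply: sumr_ge0 => i _; case: ifP => // _; exact: expR_ge0.
by rewrite ler_expR ler_pM2l // (path_excess_le_Mbox _ _ k0 Uk cover).
Qed.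

Section PartitionFunction.
Context {R : realType} (n : nat) (beta : R).

Definition path_weight (om : site -> R) (st : steps n) : R :=
  expR (beta * \sum_(i < n) om (path_site st i)).

Lemma ZpartE om (A : pred (steps n)) :
  Zpart n beta om A = ((2 : R) ^+ n)^-1 * \sum_(st | A st) path_weight om st.
Proof. by []. Qed.

Lemma Zpart_ge0 om A : 0 <= Zpart n beta om A.
Proof. by rewrite ZpartE mulr_ge0 // sumr_ge0 // => st _; exact: expR_ge0. Qed.

Lemma Zfull_gt0 om : 0 < Zfull n beta om.
Proof.
rewrite /Zfull ZpartE mulr_gt0 // (bigD1 [ffun=> true]) //= ltr_pwDl ?expR_gt0 //.
by apply: sumr_ge0 => st _; exact: expR_ge0.
Qed.

Lemma path_weight_trunc k om st :
  path_weight om st = path_weight (trunc k om) st * expR (beta * path_excess k om st).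
Proof.
rewrite /path_weight /path_excess -expRD -mulrDr -big_split /=.
by congr (expR (beta * _)); apply: eq_bigr => i _; rewrite trunc_add_excess.
Qed.

End PartitionFunction.

Lemma Zfull_le_trunc {R : realType} {n l : nat} {h : nat -> nat} {beta k : R}
    {om : site -> R} :
  (1 <= n)%N -> (1 <= l)%N -> (n <= h l)%N -> 0 < beta -> 0 < k ->
  {in critical_sites n (h 1%N), forall v, om v <= k} ->
  Zfull n beta om <= Zfull n beta (trunc k om) +
    \sum_(2 <= j < l.+1)
      expR (beta * Mbox n (h j) k om) * Zpart n beta (trunc k om) (outBox n (h j.-1)).
Proof.
move=> n1 l1 nhl beta0 k0 Uk; set tom := trunc k om.
set c := fun j => expR (beta * Mbox n (h j) k om).
have weight_bound : \sum_st path_weight n beta om st <=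
    \sum_st path_weight n beta tom st * (1 + \sum_(2 <= j < l.+1 | outBox n (h j.-1) st) c j).
  apply: ler_sum => st _; rewrite (path_weight_trunc _ _ k) ler_pM2l ?expR_gt0 //.
  exact: expR_path_excess_le.
rewrite /Zfull !ZpartE; apply: le_trans (ler_wpM2l _ weight_bound) _.
  by rewrite invr_ge0 exprn_ge0.
under eq_bigr do rewrite mulrDr mulr1 mulr_sumr.
rewrite big_split /= mulrDr lerD2l (exchange_big_dep predT) //= mulr_sumr.
apply: ler_sum => j _; rewrite ZpartE -mulr_suml.
by rewrite [c j * _]mulrCA [_ * c j]mulrC.
Qed.

Lemma lnB_le_div {R : realType} {a b c : R} :
  0 < a -> 0 < b -> 0 <= c -> a <= b + c -> ln a - ln b <= c / b.
Proof.
move=> a0 b0 c0 abc; rewrite -ln_div ?posrE //.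
have cb0 : 0 <= c / b by rewrite divr_ge0 // ltW.
apply: le_trans (le_ln1Dx _); last by apply: (lt_le_trans _ cb0); rewrite oppr_lt0.
rewrite ler_ln ?posrE ?divr_gt0 ?ltr_wpDr // ler_pdivrMr // mulrDl mul1r.
by rewrite divfK ?gt_eqF // addrC.
Qed.

Lemma ln_Zfull_sub_le {R : realType} {n l : nat} {h : nat -> nat} {beta k : R}
    {om : site -> R} :
  (1 <= n)%N -> (1 <= l)%N -> (n <= h l)%N -> 0 < beta -> 0 < k ->
  {in critical_sites n (h 1%N), forall v, om v <= k} ->
  ln (Zfull n beta om) - ln (Zfull n beta (trunc k om)) <=
  \sum_(2 <= j < l.+1) expR (beta * Mbox n (h j) k om) *
     polymer n beta (trunc k om) (outBox n (h j.-1)).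
Proof.
move=> n1 l1 nhl beta0 k0 Uk.
apply: le_trans (lnB_le_div _ _ _ (Zfull_le_trunc n1 l1 nhl beta0 k0 Uk)) _.
- exact: Zfull_gt0.
- exact: Zfull_gt0.
- by apply: sumr_ge0 => j _; rewrite mulr_ge0 ?expR_ge0 ?Zpart_ge0.
by rewrite mulr_suml; apply: ler_sum => j _; rewrite /polymer mulrA.
Qed.

Lemma measurable_set_gt d (T : measurableType d) (R : realType) (f : T -> R) (a : R) :
  measurable_fun setT f -> measurable [set x | a < f x].
Proof.
by move=> mf; rewrite -preimage_itvoy -[X in measurable X]setTI; exact: mf.
Qed.

Lemma le_measure_bigsetU {d} {T : measurableType d} {R : realType}
    (mu : {measure set T -> \bar R}) {I : Type} {s : seq I} {F : I -> set T} :
  (forall i, measurable (F i)) ->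
  (mu (\big[setU/set0]_(i <- s) F i) <= \sum_(i <- s) mu (F i))%E.
Proof.
move=> mF; elim: s => [|i s IH]; first by rewrite !big_nil measure0.
rewrite !big_cons; apply: le_trans (measureU2 _ _ _) _ => //.
  exact: bigsetU_measurable.
by rewrite leeD2l.
Qed.

Section Measurability.
Context {d} {T : measurableType d} {R : realType} {om : site -> T -> R}.
Hypothesis om_meas : forall v, measurable_fun setT (om v).
Variables (n : nat) (beta : R).

Lemma measurable_trunc k v : measurable_fun setT (fun x => trunc k (om ^~ x) v).
Proof.
apply: measurable_fun_ifT => //.
by apply: measurable_fun_ler => //; exact: measurable_cst.
Qed.

Lemma measurable_Mbox H k : measurable_fun setT (fun x => Mbox n H k (om ^~ x)).
Proof.
apply: measurable_sum => v; apply: measurable_fun_ifT => //.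
by apply: measurable_fun_ltr => //; exact: measurable_cst.
Qed.

Lemma measurable_Zpart A : measurable_fun setT (fun x => Zpart n beta (om ^~ x) A).
Proof.
apply: measurable_funM => //; rewrite [X in measurable_fun _ X](_ : _ =
    fun x => \sum_(st <- index_enum (steps n))
      (if A st then path_weight n beta (om ^~ x) st else 0)).
  apply: measurable_sum => st; case: (A st) => //.
  apply: measurableT_comp => //; apply: measurable_funM => //.
  exact: measurable_sum.
by apply: funext => x; rewrite big_mkcond.
Qed.

Lemma measurable_polymer A : measurable_fun setT (fun x => polymer n beta (om ^~ x) A).
Proof.
apply: measurable_funM; first exact: measurable_Zpart.
rewrite [X in measurable_fun _ X](_ : _ = fun x => expR (- ln (Zfull n beta (om ^~ x)))).
  apply: measurableT_comp => //; apply: measurable_funN.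
  by apply: measurableT_comp => //; exact: measurable_Zpart.
by apply: funext => x; rewrite expRN lnK // posrE Zfull_gt0.
Qed.

End Measurability.

Lemma measurable_ln_Zfull_sub d (T : measurableType d) (R : realType)
    (om : site -> T -> R) n (beta k : R) :
  (forall v, measurable_fun setT (om v)) ->
  measurable_fun setT
    (fun x => ln (Zfull n beta (om ^~ x)) - ln (Zfull n beta (trunc k (om ^~ x)))).
Proof.
move=> om_meas; have tom_meas := measurable_trunc om_meas k.
by apply: measurable_funB; apply: measurableT_comp => //; exact: measurable_Zpart.
Qed.

Lemma measurable_weighted_polymer_sum d (T : measurableType d) (R : realType)
    (om : site -> T -> R) n l (h : nat -> nat) (beta k : R) :
  (forall v, measurable_fun setT (om v)) ->
  measurable_fun setT (fun x => \sum_(2 <= j < l.+1)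
    expR (beta * Mbox n (h j) k (om ^~ x)) *
    polymer n beta (trunc k (om ^~ x)) (outBox n (h j.-1))).
Proof.
move=> om_meas; have tom_meas := measurable_trunc om_meas k.
apply: measurable_sum => j; apply: measurable_funM; last exact: measurable_polymer.
by apply: measurableT_comp => //; apply: measurable_funM => //; exact: measurable_Mbox.
Qed.

Lemma exceedance_union_bound {d} {T : measurableType d} {R : realType}
    {P : probability T R} {X : site -> {RV P >-> R}} (U : seq site) (k : R) (v0 : site) :
  identically_distributed P site X ->
  (P (\big[setU/set0]_(v <- U) [set x | k < X v x]%R) <=
   (size U)%:R%:E * P [set x | k < X v0 x]%R)%E.
Proof.
move=> X_id; have X_meas v : measurable [set x | k < X v x].
  exact/measurable_set_gt/measurable_funP.
apply: le_trans (le_measure_bigsetU P X_meas) _.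
have -> : \sum_(v <- U) P [set x | k < X v x] = \sum_(v <- U) P [set x | k < X v0 x].
  by apply: eq_bigr => v _; rewrite -!preimage_itvoy; exact: X_id (measurable_itv _).
set q := fine (P [set x | k < X v0 x]).
have -> : P [set x | k < X v0 x] = q%:E by rewrite fineK ?fin_num_measure.
by rewrite sumEFin big_const_seq count_predT iter_addr_0 -EFinM mulr_natl.
Qed.

Theorem lemma2p2 (d : measure_display) (T : measurableType d) (R : realType)
  (P : probability T R) (omega : site -> {RV P >-> R})
  (n : nat) (beta k : R) (l : nat) (h : nat -> nat) (A : R) :
  mutually_independent P site omega ->
  identically_distributed P site omega ->
  (1 <= n)%N -> 0 < beta -> 0 < k ->
  (1 <= l)%N -> h 0%N = 0%N ->
  (forall j, (j < l)%N -> (h j < h j.+1)%N) ->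
  (h l.-1 < n)%N -> (n <= h l)%N ->
  0 < A ->
  (P [set x | (ln (Zfull n beta (fun v => omega v x))
              - ln (Zfull n beta (trunc k (fun v => omega v x))) > A)%R]
   <= ((box_card n (h 1%N))%:R)%:E * P [set x | (omega (0, 0) x > k)%R]
      + P [set x | (\sum_(2 <= j < l.+1)
              expR (beta * Mbox n (h j) k (fun v => omega v x))
              * polymer n beta (trunc k (fun v => omega v x))
                  (outBox n (h j.-1)) > A)%R])%E.
Proof.
move=> _ omega_id n1 beta0 k0 l1 h0 h_incr _ nhl _.
have om_meas v : measurable_fun setT (omega v) := measurable_funP (omega v).
set U := critical_sites n (h 1%N).
set E := [set x | (A < ln _ - _)%R]; set S := [set x | (A < \sum_(2 <= j < l.+1) _)%R].
set Exceed := \big[setU/set0]_(v <- U) [set x | k < omega v x].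
have E_sub : E `<=` Exceed `|` S.
  move=> x Ex; have [/allP U_le | /allPn[v vU v_gt]] := boolP (all (fun v => omega v x <= k) U).
    right; apply: lt_le_trans Ex _.
    exact: (ln_Zfull_sub_le (om := fun v => omega v x) n1 l1 nhl beta0 k0 U_le).
  by left; rewrite /Exceed -bigcup_seq; exists v => //=; rewrite ltNge.
have Exceed_meas : measurable Exceed.
  by apply: bigsetU_measurable => v _; exact: measurable_set_gt.
have S_meas : measurable S by exact/measurable_set_gt/measurable_weighted_polymer_sum.
apply: le_trans (le_measure _ _ _ E_sub) _.
- by rewrite inE; exact/measurable_set_gt/measurable_ln_Zfull_sub.
- by rewrite inE; exact: measurableU.
apply: le_trans (measureU2 _ _ _) _ => //; apply: leeD2r.
apply: le_trans (exceedance_union_bound U k (0, 0) omega_id) _.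
have h1_gt0 : (0 < h 1%N)%N by have := h_incr 0%N l1; rewrite h0.
by rewrite lee_wpmul2r // lee_fin ler_nat size_critical_sites.
Qed.
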